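(* Fix an integer $L\ge1$, $\alpha>2$ and $\gamma>0$, and let $\Delta=\pi\,\frac{2}{\alpha}\,\Gamma(2/\alpha)\,\Gamma(1-2/\alpha)$. For $\lambda\ge 0$ define $$F(\gamma,\lambda)=1-\sum_{i=0}^{L-1}\frac{(\lambda\Delta\gamma^{2/\alpha})^i}{i!}\exp\!\left(-\lambda\Delta\gamma^{2/\alpha}\right)$$ (the outage probability of the optimum combining receiver with $L$ antennas in a Poisson field of interferers of density $\lambda$ with Rayleigh fading, in the interference-limited regime $\sigma^2=0$, with normalized threshold $\gamma$). Let $$\lambda_{\max}=\arg\max_{0\le\lambda<\infty}\lambda\bigl(1-F(\gamma,\lambda)\bigr).$$ Then $$\lambda_{\max}=\frac{g(L)}{\Delta\gamma^{2/\alpha}},$$ where $g(L)$ is the positive root of the polynomial $$Q(t)=\sum_{i=0}^{L-1}\frac{t^i}{i!}-\frac{t^L}{(L-1)!},$$ and this root satisfies $\frac{L}{2}\le g(L)\le L$. Moreover, the maximal spatial throughput is $$T_{\max}=\lambda_{\max}\bigl(1-F(\gamma,\lambda_{\max})\bigr)=\frac{g(L)^{L+1}}{(L-1)!\,\Delta\gamma^{2/\alpha}}\exp(-g(L)).$$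
   Context: $\Gamma(\cdot)$ denotes the Gamma function. The quantity $\lambda(1-F(\gamma,\lambda))$ is the spatial throughput (mean number of successful transmissions per unit area) of a single-hop ALOHA network with contention density $\lambda$. *)

From Stdlib Require Import Reals.
From Coquelicot Require Import Coquelicot.
Open Scope R_scope.

Definition Gamma_fn (s : R) : R :=
  RInt_gen (fun t => Rpower t (s - 1) * exp (- t))
           (at_right 0) (Rbar_locally p_infty).

Definition Delta_alpha (alpha : R) : R :=
  PI * (2 / alpha) * Gamma_fn (2 / alpha) * Gamma_fn (1 - 2 / alpha).

Definition outage (L : nat) (alpha gamma lambda : R) : R :=
  let x := lambda * Delta_alpha alpha * Rpower gamma (2 / alpha) in
  1 - sum_f_R0 (fun i => x ^ i / INR (Factorial.fact i)) (L - 1) * exp (- x).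

Definition throughput (L : nat) (alpha gamma lambda : R) : R :=
  lambda * (1 - outage L alpha gamma lambda).

Definition Qpoly (L : nat) (t : R) : R :=
  sum_f_R0 (fun i => t ^ i / INR (Factorial.fact i)) (L - 1) - t ^ L / INR (Factorial.fact (L - 1)).

(* With x = lambda * Delta * gamma^(2/alpha), the throughput is h(x) / (Delta * gamma^(2/alpha))
   where h(x) = x e(x) exp(-x) and e is the exponential series truncated at degree L - 1;
   one computes h'(x) = Q(x) exp(-x).  Since e(x) / x^(L-1) is nonincreasing, Q(x) / x^(L-1)
   is strictly decreasing, so Q has a single positive root g, positive before and negative
   after it: h is uniquely maximised at g, where e(g) = g^L / (L-1)! gives the maximum.
   The bounds L/2 <= g <= L come from the terms t^i / i!, which grow while i < t and shrink
   afterwards.  Finally Delta > 0 because the Gamma integrals have positive integrands. *)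

From Stdlib Require Import Reals Lra Lia Classical.
From Coquelicot Require Import Coquelicot.
Open Scope R_scope.

Lemma ex_RInt_continuous_pos (f : R -> R) a b :
  (forall t, 0 < t -> continuous f t) -> 0 < a -> 0 < b -> ex_RInt f a b.
Proof.
  intros Hcont Ha Hb. apply (ex_RInt_continuous (V := R_CompleteNormedModule)).
  intros z [Hz _]. apply Hcont. apply Rlt_le_trans with (2 := Hz).
  unfold Rmin; destruct Rle_dec; lra.
Qed.

(* The integrals over [a, b] grow with [a, b], so they converge to their supremum. *)
Lemma is_RInt_gen_of_bounded_nonneg (f : R -> R) (M : R) :
  (forall t, 0 < t -> continuous f t) ->
  (forall t, 0 < t -> 0 <= f t) ->
  (forall a b, 0 < a < 1 -> 1 < b -> RInt f a b <= M) ->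
  exists v, is_RInt_gen f (at_right 0) (Rbar_locally p_infty) v /\
    forall a b, 0 < a < 1 -> 1 < b -> RInt f a b <= v.
Proof.
  intros Hcont Hpos Hbound.
  pose proof (fun a b => ex_RInt_continuous_pos f a b Hcont) as Hex.
  assert (Hmono : forall a a' b b', 0 < a <= a' -> a' <= b' <= b ->
            RInt f a' b' <= RInt f a b).
  { intros a a' b b' Ha Hb.
    rewrite <- (RInt_Chasles (V := R_CompleteNormedModule) f a a' b)
      by (apply Hex; lra).
    rewrite <- (RInt_Chasles (V := R_CompleteNormedModule) f a' b' b)
      by (apply Hex; lra).
    assert (0 <= RInt f a a').
    { apply RInt_ge_0; [lra | apply Hex; lra | intros; apply Hpos; lra]. }
    assert (0 <= RInt f b' b).
    { apply RInt_ge_0; [lra | apply Hex; lra | intros; apply Hpos; lra]. }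
    unfold plus; simpl; lra. }
  set (E := fun y => exists a b, 0 < a < 1 /\ 1 < b /\ y = RInt f a b).
  assert (HE : exists y, E y) by (exists (RInt f (1/2) 2), (1/2), 2; repeat split; lra).
  assert (HEb : bound E) by (exists M; intros y (a & b & Ha & Hb & ->); auto).
  destruct (completeness E HEb HE) as [v [Hub Hleast]].
  exists v. split.
  2: { intros a b Ha Hb. apply Hub. exists a, b; auto. }
  intros P [eps HP].
  assert (Hclose : exists a0 b0, 0 < a0 < 1 /\ 1 < b0 /\ v - eps < RInt f a0 b0).
  { apply NNPP. intros Hno. assert (v <= v - eps); [|destruct eps; simpl in *; lra].
    apply Hleast. intros y (a & b & Ha & Hb & ->).
    apply Rnot_lt_le. intros Hlt. apply Hno. exists a, b; auto. }
  destruct Hclose as (a0 & b0 & Ha0 & Hb0 & Hv).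
  apply (Filter_prod _ _ _ (fun a => 0 < a < a0) (fun b => b0 < b)).
  - exists (mkposreal a0 (proj1 Ha0)). intros y Hy Hy0.
    change (Rabs (y - 0) < a0) in Hy. apply Rabs_def2 in Hy. lra.
  - exists b0. auto.
  - intros a b Ha Hb. exists (RInt f a b). split.
    + apply (RInt_correct (V := R_CompleteNormedModule)). apply Hex; lra.
    + apply HP. change (Rabs (RInt f a b - v) < eps).
      assert (RInt f a b <= v) by (apply Hub; exists a, b; repeat split; lra).
      assert (RInt f a0 b0 <= RInt f a b) by (apply Hmono; lra).
      apply Rabs_def1; lra.
Qed.

Lemma exp_le_compat x y : x <= y -> exp x <= exp y.
Proof.
  intros [Hlt | ->]; [left; apply exp_increasing; exact Hlt | apply Rle_refl].
Qed.

Definition Gamma_integrand (s t : R) : R := Rpower t (s - 1) * exp (- t).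

Lemma Gamma_integrand_pos s t : 0 < Gamma_integrand s t.
Proof. apply Rmult_lt_0_compat; apply exp_pos. Qed.

Lemma Gamma_integrand_continuous s t : 0 < t -> continuous (Gamma_integrand s) t.
Proof.
  intros Ht. apply (ex_derive_continuous (V := R_NormedModule)).
  unfold Gamma_integrand, Rpower. auto_derive. lra.
Qed.

Lemma RInt_Gamma_integrand_le_inv s a :
  0 < s -> 0 < a < 1 -> RInt (Gamma_integrand s) a 1 <= / s.
Proof.
  intros Hs Ha.
  assert (Hprim : is_RInt (fun t => Rpower t (s - 1)) a 1
                    (minus (Rpower 1 s / s) (Rpower a s / s))).
  { apply (is_RInt_derive (fun t => Rpower t s / s)); intros x Hx;
      rewrite Rmin_left, Rmax_right in Hx by lra.
    - apply (is_derive_ext (fun t => / s * Rpower t s)).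
      { intros t. unfold Rdiv. apply Rmult_comm. }
      replace (Rpower x (s - 1)) with (/ s * (s * Rpower x (s - 1))) by (field; lra).
      apply (is_derive_scal (fun t => Rpower t s)), is_derive_Reals.
      apply derivable_pt_lim_power. lra.
    - apply (ex_derive_continuous (V := R_NormedModule)).
      unfold Rpower. auto_derive. lra. }
  assert (Hval : RInt (fun t => Rpower t (s - 1)) a 1 = (1 - Rpower a s) / s).
  { rewrite (is_RInt_unique _ _ _ _ Hprim). unfold Rpower at 1.
    rewrite ln_1, Rmult_0_r, exp_0. unfold minus, plus, opp; simpl. field. lra. }
  apply Rle_trans with (RInt (fun t => Rpower t (s - 1)) a 1).
  - apply RInt_le; [lra | | exists (minus (Rpower 1 s / s) (Rpower a s / s)); exact Hprim |].
    + apply ex_RInt_continuous_pos; [apply Gamma_integrand_continuous | lra | lra].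
    + intros x Hx. unfold Gamma_integrand.
      rewrite <- (Rmult_1_r (Rpower x (s - 1))) at 2.
      apply Rmult_le_compat_l; [left; apply exp_pos |].
      rewrite <- exp_0. apply exp_le_compat. lra.
  - rewrite Hval. assert (0 < Rpower a s) by apply exp_pos.
    assert (0 < / s) by (apply Rinv_0_lt_compat; lra).
    unfold Rdiv. nra.
Qed.

Lemma RInt_Gamma_integrand_le_1 s b :
  s <= 1 -> 1 < b -> RInt (Gamma_integrand s) 1 b <= 1.
Proof.
  intros Hs Hb.
  assert (Hprim : is_RInt (fun t => exp (- t)) 1 b (minus (- exp (- b)) (- exp (- 1)))).
  { apply (is_RInt_derive (fun t => - exp (- t))); intros x _.
    - auto_derive; [auto | ring].
    - apply (ex_derive_continuous (V := R_NormedModule)). auto_derive. auto. }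
  apply Rle_trans with (RInt (fun t => exp (- t)) 1 b).
  - apply RInt_le; [lra | | exists (minus (- exp (- b)) (- exp (- 1))); exact Hprim |].
    + apply ex_RInt_continuous_pos; [apply Gamma_integrand_continuous | lra | lra].
    + intros x Hx. unfold Gamma_integrand.
      rewrite <- (Rmult_1_l (exp (- x))) at 2.
      apply Rmult_le_compat_r; [left; apply exp_pos |].
      assert (0 <= ln x) by (rewrite <- ln_1; apply ln_le; lra).
      unfold Rpower. rewrite <- exp_0 at 2. apply exp_le_compat. nra.
  - rewrite (is_RInt_unique _ _ _ _ Hprim). unfold minus, plus, opp; simpl.
    assert (0 < exp (- b)) by apply exp_pos.
    assert (exp (- 1) <= exp 0) by (apply exp_le_compat; lra).
    rewrite exp_0 in *.
    lra.
Qed.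

Lemma Gamma_fn_pos s : 0 < s <= 1 -> 0 < Gamma_fn s.
Proof.
  intros Hs.
  destruct (is_RInt_gen_of_bounded_nonneg (Gamma_integrand s) (/ s + 1)) as [v [Hv Hsup]].
  - apply Gamma_integrand_continuous.
  - intros t _. left. apply Gamma_integrand_pos.
  - intros a b Ha Hb.
    rewrite <- (RInt_Chasles (V := R_CompleteNormedModule) _ a 1 b)
      by (apply ex_RInt_continuous_pos; [apply Gamma_integrand_continuous | lra | lra]).
    pose proof (RInt_Gamma_integrand_le_inv s a ltac:(lra) Ha).
    pose proof (RInt_Gamma_integrand_le_1 s b ltac:(lra) Hb).
    unfold plus; simpl; lra.
  - unfold Gamma_fn. fold (Gamma_integrand s).
    rewrite (is_RInt_gen_unique _ _ Hv).
    apply Rlt_le_trans with (RInt (Gamma_integrand s) (1/2) 2); [| apply Hsup; lra].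
    apply RInt_gt_0; [lra | intros; apply Gamma_integrand_pos |].
    intros x Hx. apply Gamma_integrand_continuous. lra.
Qed.

Lemma Delta_alpha_pos alpha : 2 < alpha -> 0 < Delta_alpha alpha.
Proof.
  intros Halpha.
  assert (Hs : 0 < 2 / alpha < 1).
  { split; [apply Rdiv_lt_0_compat; lra |].
    apply Rmult_lt_reg_r with alpha; [lra |].
    unfold Rdiv. rewrite Rmult_assoc, Rinv_l by lra. lra. }
  pose proof PI_RGT_0.
  pose proof (Gamma_fn_pos (2 / alpha) ltac:(lra)).
  pose proof (Gamma_fn_pos (1 - 2 / alpha) ltac:(lra)).
  unfold Delta_alpha.
  apply Rmult_lt_0_compat; [apply Rmult_lt_0_compat; [apply Rmult_lt_0_compat |] |]; lra.
Qed.

Lemma INR_fact_pos n : 0 < INR (Factorial.fact n).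
Proof. apply lt_0_INR, Factorial.lt_O_fact. Qed.

Definition exp_trunc (n : nat) (x : R) : R :=
  sum_f_R0 (fun i => x ^ i / INR (Factorial.fact i)) n.

Lemma Qpoly_S m x :
  Qpoly (S m) x = exp_trunc m x - x ^ S m / INR (Factorial.fact m).
Proof. unfold Qpoly. replace (S m - 1)%nat with m by lia. reflexivity. Qed.

Lemma is_derive_exp_trunc n x :
  is_derive (exp_trunc n) x (exp_trunc n x - x ^ n / INR (Factorial.fact n)).
Proof.
  induction n as [|n IH].
  - unfold exp_trunc; simpl. auto_derive; [auto | field].
  - change (exp_trunc (S n)) with
      (fun y => exp_trunc n y + y ^ S n / INR (Factorial.fact (S n))).
    cbv beta.
    replace (exp_trunc n x + x ^ S n / INR (Factorial.fact (S n))
             - x ^ S n / INR (Factorial.fact (S n)))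
      with ((exp_trunc n x - x ^ n / INR (Factorial.fact n))
            + INR (S n) * x ^ n / INR (Factorial.fact (S n))).
    2: { rewrite Rfunctions.fact_simpl, mult_INR.
         pose proof (INR_fact_pos n). pose proof (lt_0_INR (S n) (Nat.lt_0_succ n)).
         field. lra. }
    apply (is_derive_plus (exp_trunc n)); [exact IH |].
    pose proof (INR_fact_pos (S n)).
    auto_derive; [lra |].
    change (match n with 0%nat => 1 | S _ => INR n + 1 end) with (INR (S n)).
    change (Factorial.fact n + n * Factorial.fact n)%nat with (Factorial.fact (S n)).
    unfold Rdiv. ring.
Qed.

Lemma continuous_Qpoly L x : continuous (Qpoly L) x.
Proof.
  apply (ex_derive_continuous (V := R_NormedModule)).
  change (Qpoly L) with (fun t => exp_trunc (L - 1) t - t ^ L / INR (Factorial.fact (L - 1))).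
  auto_derive.
  eexists. apply is_derive_exp_trunc.
Qed.

Definition normalized_throughput (m : nat) (x : R) : R := x * exp_trunc m x * exp (- x).

Lemma is_derive_normalized_throughput m x :
  is_derive (normalized_throughput m) x (Qpoly (S m) x * exp (- x)).
Proof.
  unfold normalized_throughput. auto_derive.
  - eexists. apply is_derive_exp_trunc.
  - replace (Derive (fun y => exp_trunc m y) x)
      with (exp_trunc m x - x ^ m / INR (Factorial.fact m))
      by (symmetry; apply is_derive_unique, is_derive_exp_trunc).
    rewrite Qpoly_S. pose proof (INR_fact_pos m). simpl. field. lra.
Qed.

(* [exp_trunc m x / x ^ m] is a polynomial in [1/x] with nonnegative coefficients. *)
Lemma pow_mul_exp_trunc_le m x y :
  0 < x <= y -> x ^ m * exp_trunc m y <= y ^ m * exp_trunc m x.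
Proof.
  intros Hxy. unfold exp_trunc. rewrite !scal_sum.
  apply sum_Rle. intros i Hi.
  replace m with (i + (m - i))%nat by lia. rewrite !pow_add.
  assert (x ^ (m - i) <= y ^ (m - i)) by (apply pow_incr; lra).
  assert (0 <= x ^ i * y ^ i / INR (Factorial.fact i)).
  { pose proof (INR_fact_pos i).
    apply Rdiv_le_0_compat; [apply Rmult_le_pos; apply pow_le |]; lra. }
  unfold Rdiv in *. nra.
Qed.

Lemma Qpoly_neg_after_nonpos m x y :
  0 < x < y -> Qpoly (S m) x <= 0 -> Qpoly (S m) y < 0.
Proof.
  rewrite !Qpoly_S. intros Hxy HQx.
  pose proof (pow_mul_exp_trunc_le m x y ltac:(lra)) as Hle.
  pose proof (INR_fact_pos m).
  assert (Hxm : 0 < x ^ m) by (apply pow_lt; lra).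
  assert (Hym : 0 < y ^ m) by (apply pow_lt; lra).
  assert (Hbound : exp_trunc m y <= y ^ m * x / INR (Factorial.fact m)).
  { apply Rmult_le_reg_l with (x ^ m); [exact Hxm |].
    apply Rle_trans with (1 := Hle).
    replace (x ^ m * (y ^ m * x / INR (Factorial.fact m)))
      with (y ^ m * (x ^ S m / INR (Factorial.fact m))) by (simpl; field; lra).
    apply Rmult_le_compat_l; lra. }
  assert (y ^ m * x / INR (Factorial.fact m) < y ^ S m / INR (Factorial.fact m)).
  { simpl. unfold Rdiv. apply Rmult_lt_compat_r; [apply Rinv_0_lt_compat |]; nra. }
  lra.
Qed.

Lemma pow_div_fact_S t i :
  t ^ S i / INR (Factorial.fact (S i)) = t ^ i / INR (Factorial.fact i) * (t / INR (S i)).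
Proof.
  rewrite Rfunctions.fact_simpl, mult_INR.
  pose proof (INR_fact_pos i). pose proof (lt_0_INR (S i) (Nat.lt_0_succ i)).
  simpl pow. field. lra.
Qed.

Lemma pow_div_fact_nonneg t i : 0 <= t -> 0 <= t ^ i / INR (Factorial.fact i).
Proof.
  intros Ht. pose proof (INR_fact_pos i).
  apply Rdiv_le_0_compat; [apply pow_le |]; lra.
Qed.

Lemma pow_div_fact_le_up t i j : (i <= j)%nat -> INR j <= t ->
  t ^ i / INR (Factorial.fact i) <= t ^ j / INR (Factorial.fact j).
Proof.
  induction 1 as [|j Hij IH]; intros Hj; [apply Rle_refl |].
  rewrite pow_div_fact_S. rewrite S_INR in Hj.
  pose proof (pos_INR j).
  pose proof (pow_div_fact_nonneg t j ltac:(lra)).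
  assert (1 <= t / INR (S j)).
  { rewrite S_INR. apply Rmult_le_reg_r with (INR j + 1); [lra |].
    unfold Rdiv. rewrite Rmult_assoc, Rinv_l by lra. lra. }
  apply Rle_trans with (1 := IH ltac:(lra)).
  rewrite <- (Rmult_1_r (t ^ j / _)) at 1. apply Rmult_le_compat_l; assumption.
Qed.

Lemma pow_div_fact_le_down t i j : 0 <= t -> (i <= j)%nat -> t <= INR (S i) ->
  t ^ j / INR (Factorial.fact j) <= t ^ i / INR (Factorial.fact i).
Proof.
  intros Ht. induction 1 as [|j Hij IH]; intros Hi; [apply Rle_refl |].
  rewrite pow_div_fact_S.
  pose proof (pow_div_fact_nonneg t j Ht).
  assert (HSj : INR (S i) <= INR (S j)) by (apply le_INR; lia).
  assert (0 <= t / INR (S j) <= 1).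
  { pose proof (lt_0_INR (S j) (Nat.lt_0_succ j)).
    split; [apply Rdiv_le_0_compat; lra |].
    apply Rmult_le_reg_r with (INR (S j)); [lra |].
    unfold Rdiv. rewrite Rmult_assoc, Rinv_l by lra. lra. }
  apply Rle_trans with (2 := IH Hi).
  rewrite <- (Rmult_1_r (t ^ j / _)) at 2. apply Rmult_le_compat_l; lra.
Qed.

Lemma sum_f_R0_ge_tail (f : nat -> R) (c : R) (k n : nat) :
  (forall i, 0 <= f i) -> (forall i, (k <= i <= n)%nat -> c <= f i) ->
  INR (S n - k) * c <= sum_f_R0 f n.
Proof.
  intros Hpos. induction n as [|n IH]; intros Hc; simpl sum_f_R0.
  - destruct k as [|k]; simpl.
    + specialize (Hc 0%nat ltac:(lia)). lra.
    + rewrite Rmult_0_l. apply Hpos.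
  - specialize (IH (fun i Hi => Hc i ltac:(lia))).
    destruct (Nat.le_gt_cases k (S n)) as [Hk | Hk].
    + replace (S (S n) - k)%nat with (S (S n - k)) by lia.
      rewrite S_INR. specialize (Hc (S n) ltac:(lia)). lra.
    + replace (S (S n) - k)%nat with 0%nat by lia. simpl.
      pose proof (cond_pos_sum f n Hpos). pose proof (Hpos (S n)). lra.
Qed.

Lemma Qpoly_at_L_nonpos m : Qpoly (S m) (INR (S m)) <= 0.
Proof.
  set (t := INR (S m)). rewrite Qpoly_S.
  assert (Hsum : exp_trunc m t <= sum_f_R0 (fun _ => t ^ m / INR (Factorial.fact m)) m).
  { apply sum_Rle. intros i Hi. apply pow_div_fact_le_up; [exact Hi |].
    apply le_INR. lia. }
  rewrite sum_cte in Hsum. fold t in Hsum.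
  replace (t ^ S m / INR (Factorial.fact m)) with (t ^ m / INR (Factorial.fact m) * t)
    by (simpl; unfold Rdiv; ring).
  lra.
Qed.

Lemma Qpoly_at_half_L_nonneg m : 0 <= Qpoly (S m) (INR (S m) / 2).
Proof.
  set (t := INR (S m) / 2). rewrite Qpoly_S.
  assert (Ht : 0 <= t) by (unfold t; pose proof (pos_INR (S m)); lra).
  assert (HK : exists K, (2 * K <= m <= 2 * K + 1)%nat)
    by (destruct (Nat.Even_or_Odd m) as [[K HK] | [K HK]]; exists K; lia).
  destruct HK as [K HK].
  assert (HKr : 2 * INR K <= INR m <= 2 * INR K + 1).
  { destruct HK as [HK1 HK2]. apply le_INR in HK1, HK2.
    rewrite plus_INR, mult_INR in HK2. rewrite mult_INR in HK1. simpl in HK1, HK2. lra. }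
  assert (HtK : t <= INR (S K)) by (unfold t; rewrite !S_INR; lra).
  assert (Hcount : t <= INR (S m - K)).
  { replace (S m - K)%nat with (S (m - K)) by lia.
    unfold t. rewrite !S_INR, minus_INR by lia. lra. }
  (* The terms of index K..m are all at least the last one. *)
  assert (Htail : INR (S m - K) * (t ^ m / INR (Factorial.fact m)) <= exp_trunc m t).
  { apply sum_f_R0_ge_tail; [intros; apply pow_div_fact_nonneg, Ht |].
    intros i Hi. apply pow_div_fact_le_down; [exact Ht | lia |].
    apply Rle_trans with (1 := HtK), le_INR. lia. }
  pose proof (pow_div_fact_nonneg t m Ht).
  replace (t ^ S m / INR (Factorial.fact m)) with (t * (t ^ m / INR (Factorial.fact m)))
    by (simpl; unfold Rdiv; ring).
  nra.
Qed.

Lemma Qpoly_root_exists m :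
  { g | INR (S m) / 2 <= g <= INR (S m) /\ Qpoly (S m) g = 0 }.
Proof.
  pose proof (lt_0_INR (S m) (Nat.lt_0_succ m)).
  pose proof (Qpoly_at_L_nonpos m). pose proof (Qpoly_at_half_L_nonneg m).
  destruct (IVT_gen_consistent (Qpoly (S m)) (INR (S m) / 2) (INR (S m)) 0)
    as [g [Hg Hroot]].
  - apply continuous_Qpoly.
  - split.
    + apply Rle_trans with (1 := Rmin_r _ _). assumption.
    + apply Rle_trans with (2 := Rmax_l _ _). assumption.
  - exists g. rewrite Rmin_left, Rmax_right in Hg by lra. auto.
Qed.

Lemma Qpoly_pos_root_unique m g t :
  0 < g -> 0 < t -> Qpoly (S m) g = 0 -> Qpoly (S m) t = 0 -> t = g.
Proof.
  intros Hg Ht Hgroot Htroot.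
  destruct (Rtotal_order t g) as [Hlt | [Heq | Hgt]]; [| exact Heq |].
  - pose proof (Qpoly_neg_after_nonpos m t g ltac:(lra) ltac:(lra)). lra.
  - pose proof (Qpoly_neg_after_nonpos m g t ltac:(lra) ltac:(lra)). lra.
Qed.

Lemma derive_sign_strict_max (f f' : R -> R) (a g : R) :
  (forall c, is_derive f c (f' c)) ->
  (forall c, a < c < g -> 0 < f' c) -> (forall c, g < c -> f' c < 0) ->
  forall x, a <= x -> x <> g -> f x < f g.
Proof.
  intros Hf Hinc Hdec x Hx Hne.
  assert (Hmvt : forall u v, u < v -> exists c, f v - f u = f' c * (v - u) /\ u < c < v).
  { intros u v Huv. apply MVT_cor2; [exact Huv |].
    intros c _. apply is_derive_Reals, Hf. }
  destruct (Rlt_or_le x g) as [Hlt | Hle].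
  - destruct (Hmvt x g Hlt) as [c [Hc Hcin]].
    pose proof (Hinc c ltac:(lra)). nra.
  - destruct (Hmvt g x ltac:(lra)) as [c [Hc Hcin]].
    pose proof (Hdec c ltac:(lra)). nra.
Qed.

Lemma normalized_throughput_strict_max m g :
  0 < g -> Qpoly (S m) g = 0 ->
  forall x, 0 <= x -> x <> g -> normalized_throughput m x < normalized_throughput m g.
Proof.
  intros Hg Hroot.
  apply (derive_sign_strict_max _ (fun c => Qpoly (S m) c * exp (- c)));
    [apply is_derive_normalized_throughput | |]; intros c Hc; pose proof (exp_pos (- c)).
  - apply Rmult_lt_0_compat; [| assumption].
    apply Rnot_le_lt. intros HQc.
    pose proof (Qpoly_neg_after_nonpos m c g ltac:(lra) HQc). lra.
  - pose proof (Qpoly_neg_after_nonpos m g c ltac:(lra) ltac:(lra)). nra.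
Qed.

Lemma throughput_S m alpha gamma lambda :
  Delta_alpha alpha <> 0 ->
  throughput (S m) alpha gamma lambda =
    normalized_throughput m (lambda * (Delta_alpha alpha * Rpower gamma (2 / alpha)))
    / (Delta_alpha alpha * Rpower gamma (2 / alpha)).
Proof.
  intros HD. unfold throughput, outage, normalized_throughput. cbv zeta.
  replace (S m - 1)%nat with m by lia. rewrite <- Rmult_assoc.
  fold (exp_trunc m (lambda * Delta_alpha alpha * Rpower gamma (2 / alpha))).
  field. split; [apply Rgt_not_eq, exp_pos | exact HD].
Qed.

Lemma Delta_Rpower_pos alpha gamma :
  2 < alpha -> 0 < Delta_alpha alpha * Rpower gamma (2 / alpha).
Proof. intros Halpha. apply Rmult_lt_0_compat; [apply Delta_alpha_pos, Halpha | apply exp_pos]. Qed.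

Lemma throughput_lt_at_root m alpha gamma g lambda :
  2 < alpha -> 0 < g -> Qpoly (S m) g = 0 -> 0 <= lambda ->
  lambda <> g / (Delta_alpha alpha * Rpower gamma (2 / alpha)) ->
  throughput (S m) alpha gamma lambda <
  throughput (S m) alpha gamma (g / (Delta_alpha alpha * Rpower gamma (2 / alpha))).
Proof.
  intros Halpha Hg Hroot Hl Hne.
  pose proof (Delta_Rpower_pos alpha gamma Halpha) as HD.
  pose proof (Delta_alpha_pos alpha Halpha).
  rewrite !throughput_S by lra.
  set (D := Delta_alpha alpha * Rpower gamma (2 / alpha)) in *.
  replace (g / D * D) with g by (field; lra).
  apply Rmult_lt_compat_r; [apply Rinv_0_lt_compat, HD |].
  apply normalized_throughput_strict_max; [exact Hg | exact Hroot | nra |].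
  intros Heq. apply Hne. rewrite <- Heq. field. lra.
Qed.

Lemma throughput_at_root m alpha gamma g :
  2 < alpha -> Qpoly (S m) g = 0 ->
  throughput (S m) alpha gamma (g / (Delta_alpha alpha * Rpower gamma (2 / alpha))) =
  g ^ (S m + 1) / (INR (Factorial.fact m) * Delta_alpha alpha * Rpower gamma (2 / alpha))
  * exp (- g).
Proof.
  intros Halpha Hroot.
  pose proof (Delta_Rpower_pos alpha gamma Halpha) as HD.
  pose proof (Delta_alpha_pos alpha Halpha).
  rewrite throughput_S by lra. rewrite Qpoly_S in Hroot.
  rewrite Rmult_assoc. set (D := Delta_alpha alpha * Rpower gamma (2 / alpha)) in *.
  replace (g / D * D) with g by (field; lra).
  unfold normalized_throughput.
  replace (exp_trunc m g) with (g ^ S m / INR (Factorial.fact m)) by lra.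
  pose proof (INR_fact_pos m). rewrite pow_add. simpl pow. field. lra.
Qed.

Theorem corollary1 (L : nat) (alpha gamma : R) :
  (1 <= L)%nat -> 2 < alpha -> 0 < gamma ->
  exists g : R,
    0 < g /\ Qpoly L g = 0 /\
    (forall t, 0 < t -> Qpoly L t = 0 -> t = g) /\
    INR L / 2 <= g <= INR L /\
    (let lmax := g / (Delta_alpha alpha * Rpower gamma (2 / alpha)) in
     0 <= lmax /\
     (forall lambda, 0 <= lambda ->
        throughput L alpha gamma lambda <= throughput L alpha gamma lmax) /\
     (forall lambda, 0 <= lambda ->
        throughput L alpha gamma lambda = throughput L alpha gamma lmax ->
        lambda = lmax) /\
     throughput L alpha gamma lmax =
       g ^ (L + 1) / (INR (Factorial.fact (L - 1)) * Delta_alpha alpha * Rpower gamma (2 / alpha))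
       * exp (- g)).
Proof.
  (* [Rpower] is positive for any base. *)
  intros HL Halpha _. destruct L as [|m]; [lia |].
  destruct (Qpoly_root_exists m) as [g [Hbounds Hroot]].
  assert (Hg : 0 < g) by (pose proof (lt_0_INR (S m) (Nat.lt_0_succ m)); lra).
  pose proof (throughput_lt_at_root m alpha gamma g) as Hmax.
  exists g. split; [exact Hg |]. split; [exact Hroot |].
  split; [intros t Ht; exact (Qpoly_pos_root_unique m g t Hg Ht Hroot) |].
  split; [exact Hbounds |].
  intros lmax.
  assert (Hlt : forall lambda, 0 <= lambda -> lambda <> lmax ->
            throughput (S m) alpha gamma lambda < throughput (S m) alpha gamma lmax)
    by (intros; apply Hmax; assumption).
  split; [| split; [| split]].
  - left. apply Rdiv_lt_0_compat; [exact Hg | apply Delta_Rpower_pos, Halpha].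
  - intros lambda Hl. destruct (Req_dec lambda lmax) as [-> | Hne]; [apply Rle_refl |].
    left. apply Hlt; assumption.
  - intros lambda Hl Heq. destruct (Req_dec lambda lmax) as [E | Hne]; [exact E |].
    pose proof (Hlt lambda Hl Hne). lra.
  - replace (S m - 1)%nat with m by lia. apply throughput_at_root; assumption.
Qed.
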